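(* Suppose that $K$ is algebraically closed of characteristic $0$ and its residue class field $k$ has characteristic $p>0$. Then for each $m\in\mathbb{N}$ there exist $x_1,\dots,x_m\in K^\vee$ such that $\{\pi(x_1),\dots,\pi(x_m)\}$ is an orthogonal subset of $K^\vee/K$, where $\pi:K^\vee\to K^\vee/K$ is the canonical quotient map.
   Context: $K$ is a complete non-archimedean non-trivially valued field which is not spherically complete; $K^\vee$ is a fixed spherically complete valued field which is an immediate extension of $K$, regarded as a $K$-normed space with its absolute value. $K^\vee/K$ carries the quotient norm $\|\pi(z)\|=\inf_{a\in K}|z-a|$. A subset $S$ not containing $0$ is orthogonal if $\|\sum_i\lambda_is_i\|=\max_i\|\lambda_is_i\|$ for all finitely many distinct $s_i\in S$ and $\lambda_i\in K$. *)

From HB Require Import structures.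
From mathcomp Require Import all_boot all_order all_algebra.
From mathcomp Require Import boolp classical_sets reals.
Set Implicit Arguments. Unset Strict Implicit. Unset Printing Implicit Defensive.
Import Order.TTheory GRing.Theory Num.Theory.
Local Open Scope ring_scope.
Local Open Scope classical_set_scope.

Definition nonarch_abs (R : realType) (F : fieldType) (v : F -> R) : Prop :=
  [/\ forall x, 0 <= v x,
      forall x, v x = 0 <-> x = 0,
      forall x y, v (x * y) = v x * v y
    & forall x y, v (x + y) <= Num.max (v x) (v y)].

Definition cball (R : realType) (F : fieldType) (v : F -> R) (a : F) (r : R) :
  set F := [set y | v (y - a) <= r].

Definition sph_complete (R : realType) (F : fieldType) (v : F -> R) : Prop :=
  forall (a : nat -> F) (r : nat -> R),
    (forall n, 0 <= r n) ->
    (forall n, cball v (a n.+1) (r n.+1) `<=` cball v (a n) (r n)) ->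
    exists y, forall n, cball v (a n) (r n) y.

Definition cauchy_seq (R : realType) (F : fieldType) (v : F -> R) (u : nat -> F) :=
  forall e : R, 0 < e -> exists N, forall m n, (N <= m)%N -> (N <= n)%N ->
    v (u m - u n) < e.

Definition converges (R : realType) (F : fieldType) (v : F -> R) (u : nat -> F) :=
  exists l, forall e : R, 0 < e -> exists N, forall n, (N <= n)%N -> v (u n - l) < e.

Definition complete_abs (R : realType) (F : fieldType) (v : F -> R) : Prop :=
  forall u, cauchy_seq v u -> converges v u.

Definition nontrivial_abs (R : realType) (F : fieldType) (v : F -> R) : Prop :=
  exists a, v a <> 0 /\ v a <> 1.

(* L (absolute value v) is an immediate extension of K via i:
   same value group and same residue field. *)
Definition immediate_ext (R : realType) (K L : fieldType)
  (i : {rmorphism K -> L}) (v : L -> R) : Prop :=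
  (forall z, z <> 0 -> exists a, v (i a) = v z) /\
  (forall z, v z <= 1 -> exists a, v (i a) <= 1 /\ v (z - i a) < 1).

(* quotient norm on L/K: || pi z || = inf_{a in K} v (z - i a) *)
Definition qnorm (R : realType) (K L : fieldType)
  (i : {rmorphism K -> L}) (v : L -> R) (z : L) : R :=
  inf (range (fun a : K => v (z - i a))).

(* the family pi(x_1),...,pi(x_m) is orthogonal in the K-normed space L/K:
   no pi(x_j) is 0, and for all scalars lambda_j in K,
   || sum_j lambda_j pi(x_j) || = max_j || lambda_j pi(x_j) ||.
   (scalar action: lambda pi(x) = pi(i lambda * x)) *)
Definition quot_orthogonal (R : realType) (K L : fieldType)
  (i : {rmorphism K -> L}) (v : L -> R) (m : nat) (x : 'I_m -> L) : Prop :=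
  (forall j, forall a : K, x j <> i a) /\
  (forall lam : 'I_m -> K,
     qnorm i v (\sum_(j < m) i (lam j) * x j)
     = \big[Num.max/0]_(j < m) qnorm i v (i (lam j) * x j)).

From HB Require Import structures.
From mathcomp Require Import all_boot all_order all_algebra.
From mathcomp Require Import boolp classical_sets reals.
From mathcomp Require Import ring.
Import Order.TTheory GRing.Theory Num.Theory.
Local Open Scope ring_scope.
Set Implicit Arguments. Unset Strict Implicit. Unset Printing Implicit Defensive.

(* Since K^vee is spherically complete and K is not, there is some z0 in
   K^vee \ K, and completeness of K makes its distance r0 to K positive.  The
   value groups agree, so for a in K there is d in K with |d| = |z0 - a|, and
   z = (z0 - a) / d has |z| = 1 and distance r0 / |z0 - a| to K; taking
   |z0 - a| close to r0 gives |p| <= r^(p^m) for that distance r.  We show that the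
   classes of z^(p^j), j < m, are orthogonal.  Given lambda_j and c in K, the
   polynomial F = sum_j lambda_j X^(p^j) - c splits over K, and every root lies at
   distance > r from z, because distances to K are never attained in an
   immediate extension; so |F(z)| = |F(a)| for every a in K with |z - a| = t
   close enough to r.  As |p| is so small, |z^(p^j) - a^(p^j)| = t^(p^j), and
   for t close to r a single term |lambda_j| t^(p^j) strictly dominates; hence
   |F(z) - F(a)| = max_j |lambda_j| t^(p^j), and |F(z)| = |F(a)| forces
   |F(z)| >= max_j |lambda_j| t^(p^j), which bounds each ||lambda_j pi(z^(p^j))||. *)

Section RealLemmas.
Variable R : realType.

Lemma subrXX_le (y t : R) n : 0 <= y -> y <= t -> t <= y + 1 ->
  t ^+ n - y ^+ n <= (t - y) * (n%:R * (y + 1) ^+ n.-1).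
Proof.
move=> y0 yt ty1; rewrite subrXX ler_wpM2l ?subr_ge0 //.
have -> : n%:R * (y + 1) ^+ n.-1 = \sum_(k < n) (y + 1) ^+ n.-1.
  by rewrite sumr_const card_ord mulr_natl.
apply: ler_sum => k _; have t0 : 0 <= t by apply: le_trans yt.
have -> : (y + 1) ^+ n.-1 = (y + 1) ^+ (n.-1 - k) * (y + 1) ^+ k.
  by rewrite -exprD subnK // -ltnS prednK // (leq_ltn_trans _ (ltn_ord k)).
by apply: ler_pM; rewrite ?exprn_ge0 // lerXn2r ?nnegrE ?lerDl ?addr_ge0.
Qed.

Lemma exprn_lt_near_right (A B y : R) n : 0 <= A -> 0 <= y -> A * y ^+ n < B ->
  exists2 e, 0 < e & forall t, y <= t -> t < y + e -> A * t ^+ n < B.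
Proof.
move=> A0 y0 lt_yB.
pose C := A * (n%:R * (y + 1) ^+ n.-1) + 1.
have C0 : 0 < C by rewrite ltr_pwDr // !mulr_ge0 ?exprn_ge0 ?addr_ge0.
exists (Num.min 1 ((B - A * y ^+ n) / C)).
  by rewrite lt_min ltr01 divr_gt0 // subr_gt0.
move=> t yt; rewrite -ltrBlDl lt_min => /andP [t1 t2].
have ty1 : t <= y + 1 by rewrite -lerBlDl ltW.
rewrite -[A * t ^+ n](subrK (A * y ^+ n)) -ltrBrDr -mulrBr.
apply: le_lt_trans (_ : (t - y) * C < _); last by rewrite -ltr_pdivlMr.
apply: le_trans (ler_wpM2l A0 (subrXX_le n y0 yt ty1)) _.
by rewrite mulrCA /C mulrDr mulr1 lerDl subr_ge0.
Qed.

Lemma mulr_exprn_lt (A B r t : R) (a b : nat) : 0 <= A -> 0 < B -> 0 < r -> r < t ->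
  (a < b)%N -> A * r ^+ a <= B * r ^+ b -> A * t ^+ a < B * t ^+ b.
Proof.
move=> A0 B0 r0 rt ab.
have t0 : 0 < t by apply: lt_trans rt.
rewrite -(subnK (ltnW ab)) !exprD !mulrA ler_pM2r ?ltr_pM2r ?exprn_gt0 // => h.
apply: le_lt_trans h _; rewrite ltr_pM2l // ltrXn2r ?ltW //.
by rewrite subn_eq0 -ltnNge.
Qed.

Lemma right_nbhs_seq (T : eqType) (P : T -> R -> Prop) (r : R) (s : seq T) :
  (forall j, j \in s -> exists2 u, r < u & forall t, r < t -> t < u -> P j t) ->
  exists2 u, r < u & forall j t, j \in s -> r < t -> t < u -> P j t.
Proof.
elim: s => [|x s IH] hs.
  by exists (r + 1) => [|j t]; rewrite ?ltrDl ?in_nil.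
have [u1 ru1 h1] := hs x (mem_head _ _).
have [u2 ru2 h2] := IH (fun j js => hs j (@mem_behead _ (x :: s) j js)).
exists (Num.min u1 u2) => [|j t]; first by rewrite lt_min ru1 ru2.
rewrite in_cons lt_min => /orP [/eqP -> | js] rt /andP [t1 t2]; [exact: h1 | exact: h2].
Qed.

Lemma right_nbhs_fin (T : finType) (P : T -> R -> Prop) (r : R) :
  (forall j, exists2 u, r < u & forall t, r < t -> t < u -> P j t) ->
  exists2 u, r < u & forall j t, r < t -> t < u -> P j t.
Proof.
move=> hP; have [u ru hu] := @right_nbhs_seq _ P r (enum T) (fun j _ => hP j).
by exists u => // j t; apply: hu; rewrite mem_enum.
Qed.

Lemma exists_last_argmax (m : nat) (w : 'I_m -> R) (j0 : 'I_m) :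
  exists J, (forall j, w j <= w J) /\ (forall j : 'I_m, (J < j)%N -> w j < w J).
Proof.
case: (@arg_maxP _ _ 'I_m j0 xpredT w isT) => J0 _ maxJ0.
case: (@arg_maxnP 'I_m J0 (fun j => w j == w J0) val (eqxx _)) => J /eqP wJ lastJ.
exists J; split => [j | j Jj]; rewrite wJ; first exact: maxJ0.
rewrite lt_neqAle; apply/andP; split; last exact: maxJ0.
by apply: contraTneq Jj => /eqP/lastJ; rewrite -leqNgt.
Qed.

Lemma exists_strict_dominant (m : nat) (A : 'I_m -> R) (e : 'I_m -> nat) (r : R)
    (j0 : 'I_m) :
  0 < r -> (forall j, 0 <= A j) -> 0 < A j0 ->
  (forall j k : 'I_m, (j < k)%N -> (e j < e k)%N) ->
  exists J, exists2 u, r < u &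
    forall t j, r < t -> t < u -> j != J -> A j * t ^+ e j < A J * t ^+ e J.
Proof.
move=> r0 A0 Aj0 e_mono.
pose w j := A j * r ^+ e j.
(* Take J the last index maximising w: for t > r the smaller exponents of the
   earlier indices make them lose, the later ones lose by continuity. *)
have [J [wJ_max wJ_last]] := exists_last_argmax w j0.
have AJ0 : 0 < A J.
  rewrite lt_def A0 andbT; apply: contraTneq (wJ_max j0) => AJ0.
  by rewrite /w AJ0 mul0r -ltNge mulr_gt0 ?exprn_gt0.
have [u ru hu] : exists2 u, r < u &
    forall (j : 'I_m) t, r < t -> t < u -> (J < j)%N -> A j * t ^+ e j < w J.
  apply: right_nbhs_fin => j; case: (ltnP J j) => [Jj | _]; last first.
    by exists (r + 1); rewrite ?ltrDl.
  have [d d0 hd] := exprn_lt_near_right (A0 j) (ltW r0) (wJ_last j Jj).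
  by exists (r + d) => [|t rt td _]; rewrite ?ltrDl // hd ?ltW.
exists J, u => // t j rt tu jJ; case: (ltngtP j J) => [lt_jJ | lt_Jj | eq_jJ].
- exact: mulr_exprn_lt (A0 j) AJ0 r0 rt (e_mono _ _ lt_jJ) (wJ_max j).
- apply: lt_le_trans (hu j t rt tu lt_Jj) _.
  by rewrite ler_wpM2l ?A0 // lerXn2r ?nnegrE ?ltW // (lt_trans r0).
- by move: jJ; rewrite (val_inj eq_jJ) eqxx.
Qed.

Lemma exists_invn_lt (e : R) : 0 < e ->
  exists N : nat, forall n, (N <= n)%N -> n.+1%:R^-1 < e.
Proof.
move=> e0; exists (Num.Def.archi_bound e^-1) => n le_Nn.
rewrite -[e]invrK ltf_pV2 ?posrE ?invr_gt0 ?ltr0Sn //.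
have ei : 0 <= e^-1 by rewrite invr_ge0 ltW.
by apply: lt_le_trans (archi_boundP ei) _; rewrite ler_nat leqW.
Qed.

End RealLemmas.

Lemma prime_dvd_bin_exp p k j : prime p -> (0 < j < p ^ k)%N -> (p %| 'C(p ^ k, j))%N.
Proof.
move=> p_pr; case: j => // j /= ltjpk; apply: contraT => ndvd.
have cop : coprime (p ^ k) 'C(p ^ k, j.+1) by rewrite coprimeXl // prime_coprime.
have : (p ^ k %| j.+1 * 'C(p ^ k, j.+1))%N by rewrite -mul_bin_diag dvdn_mulr.
rewrite Gauss_dvdl // => /dvdn_leq le_pk.
by move: (le_pk isT); rewrite leqNgt ltjpk.
Qed.

Section NonArchimedean.
Variables (R : realType) (L : fieldType) (v : L -> R).
Hypothesis hv : nonarch_abs v.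

Lemma abs_ge0 x : 0 <= v x. Proof. by case: hv. Qed.
Lemma abs_eq0 x : v x = 0 <-> x = 0. Proof. by case: hv. Qed.
Lemma absM x y : v (x * y) = v x * v y. Proof. by case: hv. Qed.
Lemma absD_le_max x y : v (x + y) <= Num.max (v x) (v y). Proof. by case: hv. Qed.

Lemma abs0 : v 0 = 0. Proof. exact/abs_eq0. Qed.

Lemma abs_gt0 x : x != 0 -> 0 < v x.
Proof. by move=> /eqP x0; rewrite lt_def abs_ge0 andbT; apply/eqP => /abs_eq0. Qed.

Lemma abs1 : v 1 = 1.
Proof.
have h : v 1 * v 1 = v 1 * 1 by rewrite -absM !mulr1.
by apply: (mulfI _ h); rewrite gt_eqF // abs_gt0 ?oner_eq0.
Qed.

Lemma absN x : v (- x) = v x.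
Proof.
have vN1 : v (-1) ^+ 2 = 1 ^+ 2 by rewrite expr2 -absM mulrNN mulr1 abs1 expr1n.
move/eqP: vN1; rewrite eqrXn2 ?abs_ge0 // => /eqP vN1.
by rewrite -mulN1r absM vN1 mul1r.
Qed.

Lemma absX x n : v (x ^+ n) = v x ^+ n.
Proof. by elim: n => [|n IH]; rewrite ?expr0 ?abs1 // !exprS absM IH. Qed.

Lemma absV x : v x^-1 = (v x)^-1.
Proof.
have [->|x0] := eqVneq x 0; first by rewrite invr0 abs0 invr0.
apply: (mulfI (lt0r_neq0 (abs_gt0 x0))).
by rewrite -absM !mulfV ?abs1 // lt0r_neq0 // abs_gt0.
Qed.

Lemma absD_le x y c : v x <= c -> v y <= c -> v (x + y) <= c.
Proof. by move=> hx hy; apply: le_trans (absD_le_max x y) _; rewrite ge_max hx hy. Qed.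

Lemma absD_lt x y c : v x < c -> v y < c -> v (x + y) < c.
Proof. by move=> hx hy; apply: le_lt_trans (absD_le_max x y) _; rewrite gt_max hx hy. Qed.

Lemma absD_eql x y : v y < v x -> v (x + y) = v x.
Proof.
move=> yx; apply/eqP; rewrite eq_le (absD_le (lexx _) (ltW yx)) /=.
have := absD_le_max (x + y) (- y); rewrite addrK absN le_max.
by case/orP=> // /(lt_le_trans yx); rewrite ltxx.
Qed.

Lemma absB_le_of_eq x y : v x = v y -> v (x - y) <= v x.
Proof. by move=> xy; apply: absD_le; rewrite ?absN -?xy. Qed.

Lemma abs_sum_le (I : Type) (r : seq I) (P : pred I) (F : I -> L) c : 0 <= c ->
  (forall j, P j -> v (F j) <= c) -> v (\sum_(j <- r | P j) F j) <= c.
Proof.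
by move=> c0 hF; elim/big_ind: _ => //; [rewrite abs0 | move=> x y; exact: absD_le].
Qed.

Lemma abs_sum_lt (I : Type) (r : seq I) (P : pred I) (F : I -> L) c : 0 < c ->
  (forall j, P j -> v (F j) < c) -> v (\sum_(j <- r | P j) F j) < c.
Proof.
by move=> c0 hF; elim/big_ind: _ => //; [rewrite abs0 | move=> x y; exact: absD_lt].
Qed.

Lemma abs_sum_dominant (I : finType) (F : I -> L) (J : I) :
  (forall j, j != J -> v (F j) < v (F J)) -> v (\sum_j F j) = v (F J).
Proof.
move=> hJ; rewrite (bigD1 J) //=.
have [FJ0 | FJ0] := eqVneq (F J) 0.
  by rewrite big1 ?addr0 // => j /hJ; rewrite FJ0 abs0 ltNge abs_ge0.
by rewrite absD_eql // abs_sum_lt ?abs_gt0.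
Qed.

Lemma abs_prod (I : Type) (r : seq I) (F : I -> L) :
  v (\prod_(j <- r) F j) = \prod_(j <- r) v (F j).
Proof. by elim/big_rec2: _ => [|j x y _ <-]; rewrite ?abs1 // absM. Qed.

Lemma abs_natr_le1 n : v n%:R <= 1.
Proof.
elim: n => [|n IH]; first by rewrite abs0.
by rewrite -addn1 natrD absD_le // abs1.
Qed.

Lemma abs_exprD_sub_le (p k : nat) (x y : L) : prime p -> v x <= 1 -> v y <= 1 ->
  v ((x + y) ^+ (p ^ k) - x ^+ (p ^ k) - y ^+ (p ^ k)) <= v p%:R * v y.
Proof.
move=> p_pr vx1 vy1.
have : (0 < p ^ k)%N by rewrite expn_gt0 prime_gt0.
case pk : (p ^ k)%N => [//|n] _.
rewrite exprDn big_ord_recr big_ord_recl /= subn0 subnn bin0 binn !expr0 mulr1 mul1r.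
set S := \sum_(j < n) _.
have -> : x ^+ n.+1 *+ 1 + S + y ^+ n.+1 *+ 1 - x ^+ n.+1 - y ^+ n.+1 = S by ring.
apply: abs_sum_le => [|j _]; first by rewrite mulr_ge0 ?abs_ge0.
have /dvdnP [q ->] : (p %| 'C(n.+1, bump 0 j))%N.
  by rewrite -pk prime_dvd_bin_exp // pk ltnS /bump /= add1n ltn_ord.
rewrite -mulr_natr natrM !absM !absX.
have vyj : v y ^+ bump 0 j <= v y.
  by rewrite /bump /= add1n exprS ler_piMr ?abs_ge0 ?exprn_ile1 ?abs_ge0.
apply: le_trans (_ : 1 * v y * (1 * v p%:R) <= _); last by rewrite !mul1r mulrC.
apply: ler_pM; rewrite ?mulr_ge0 ?exprn_ge0 ?abs_ge0 //.
  by apply: ler_pM; rewrite ?exprn_ge0 ?abs_ge0 ?exprn_ile1 ?abs_ge0.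
by apply: ler_pM; rewrite ?abs_ge0 ?abs_natr_le1.
Qed.

Section QuotientNorm.
Variables (K : fieldType) (i : {rmorphism K -> L}).
Local Notation qn := (qnorm i v).

Lemma qnorm_le x a : qn x <= v (x - i a).
Proof.
apply: ge_inf; last by exists a.
by exists 0 => _ [b _ <-]; apply: abs_ge0.
Qed.

Lemma qnorm_ge x B : (forall a, B <= v (x - i a)) -> B <= qn x.
Proof.
move=> hB; apply: lb_le_inf => [|_ [a _ <-]]; last exact: hB.
by exists (v (x - i 0)), 0.
Qed.

Lemma qnorm_ge0 x : 0 <= qn x.
Proof. by apply: qnorm_ge => a; apply: abs_ge0. Qed.

Lemma qnorm_approx x e : 0 < e -> exists a, v (x - i a) < qn x + e.
Proof.
move=> e0; have : qn x < qn x + e by rewrite ltrDl.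
by case/inf_lt => [|_ [a _ <-] xa]; [exists (v (x - i 0)), 0 | exists a].
Qed.

Lemma qnorm0 : qn 0 = 0.
Proof.
apply/eqP; rewrite eq_le qnorm_ge0 andbT.
by apply: le_trans (qnorm_le 0 0) _; rewrite rmorph0 subr0 abs0.
Qed.

Lemma qnormD_le_max x y : qn (x + y) <= Num.max (qn x) (qn y).
Proof.
apply/ler_addgt0Pr => e e0.
have [a xa] := qnorm_approx x e0; have [b yb] := qnorm_approx y e0.
apply: le_trans (qnorm_le (x + y) (a + b)) _.
rewrite rmorphD opprD addrACA; apply: absD_le; apply: ltW.
  by apply: lt_le_trans xa _; rewrite lerD2r le_max lexx.
by apply: lt_le_trans yb _; rewrite lerD2r le_max lexx orbT.
Qed.

Lemma qnorm_sum_le (m : nat) (F : 'I_m -> L) :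
  qn (\sum_(j < m) F j) <= \big[Num.max/0]_(j < m) qn (F j).
Proof.
elim/big_rec2: _ => [|j x y _ h]; first by rewrite qnorm0.
by apply: le_trans (qnormD_le_max _ _) _; rewrite ge_max !le_max lexx h orbT.
Qed.

Hypothesis himm : immediate_ext i v.

Lemma qnorm_lt_dist x : (forall b, x <> i b) -> forall b, qn x < v (x - i b).
Proof.
move=> xK b; rewrite lt_def qnorm_le andbT; apply/eqP => qx.
have xb0 : x - i b != 0 by rewrite subr_eq0; apply/eqP/xK.
have [c vc] := himm.1 _ (elimN eqP xb0).
have c0 : i c != 0 by apply: contra_neq xb0 => c0; apply/abs_eq0; rewrite -vc c0 abs0.
have [|d [_ hd]] := himm.2 ((x - i b) / i c).
  by rewrite absM absV vc mulfV ?lt0r_neq0 ?abs_gt0.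
have := qnorm_le x (b + c * d).
have -> : x - i (b + c * d) = i c * ((x - i b) / i c - i d).
  by rewrite rmorphD rmorphM mulrBr mulrCA mulfV // mulr1 opprD addrA.
by rewrite absM vc -qx ler_pMr ?abs_gt0 // leNgt hd.
Qed.

Lemma exists_dist_near z u : (forall b, z <> i b) -> qn z < u ->
  exists a, qn z < v (z - i a) /\ v (z - i a) < u.
Proof.
move=> zK zu; have [a] : exists a, v (z - i a) < qn z + (u - qn z).
  by apply: qnorm_approx; rewrite subr_gt0.
by rewrite subrKC => za; exists a; rewrite qnorm_lt_dist.
Qed.

Lemma exists_unit_dist_ge (P : R) (N : nat) z0 :
  (forall b, z0 <> i b) -> 0 < qn z0 -> 0 <= P -> P < 1 ->
  exists z, [/\ forall b, z <> i b, v z = 1, 0 < qn z & P <= qn z ^+ N].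
Proof.
move=> z0K r0 P0 P1; set r := qn z0 in r0 *.
have Pr : P * r ^+ N < r ^+ N by rewrite gtr_pMl // exprn_gt0.
have [e e0 near_r] := exprn_lt_near_right P0 (ltW r0) Pr.
have [a za] := qnorm_approx z0 e0; have rs := qnorm_lt_dist z0K a.
set s := v (z0 - i a) in za rs.
have s0 : 0 < s by apply: le_lt_trans (qnorm_ge0 _) rs.
have za0 : z0 - i a <> 0 by move=> za0; move: s0; rewrite /s za0 abs0 ltxx.
have [c vc] := himm.1 _ za0.
have c0 : i c != 0 by apply: contraTneq s0 => c0; rewrite /s -vc c0 abs0 ltxx.
set z := (z0 - i a) / i c.
have z0E b : z0 - i (a + c * b) = i c * (z - i b).
  by rewrite rmorphD rmorphM /z mulrBr mulrCA mulfV // mulr1 opprD addrA.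
have rs_le : r / s <= qn z.
  by apply: qnorm_ge => b; rewrite ler_pdivrMr // /s -vc -absM mulrC -z0E qnorm_le.
have rs0 : 0 <= r / s by rewrite divr_ge0 ?ltW.
exists z; split.
- move=> b zb; apply: (z0K (a + c * b)); apply/eqP.
  by rewrite -subr_eq0 z0E zb subrr mulr0.
- by rewrite /z absM absV vc mulfV // lt0r_neq0.
- by apply: lt_le_trans rs_le; rewrite divr_gt0.
apply: le_trans (_ : (r / s) ^+ N <= _); last first.
  by rewrite lerXn2r ?nnegrE // (le_trans rs0).
by rewrite expr_div_n ler_pdivlMr ?exprn_gt0 // ltW // near_r // ltW.
Qed.

Hypothesis hcomplete : complete_abs (fun a : K => v (i a)).

Lemma qnorm_gt0 z : (forall b, z <> i b) -> 0 < qn z.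
Proof.
move=> zK; rewrite lt_def qnorm_ge0 andbT; apply/eqP => qz0.
have approx n : exists b, v (z - i b) < n.+1%:R^-1.
  by rewrite -[_^-1]add0r -qz0; apply: qnorm_approx; rewrite invr_gt0 ltr0Sn.
have [bs zbs] := choice approx.
have [l bs_l] : converges (fun a : K => v (i a)) bs.
  apply: hcomplete => e e0; have [N hN] := exists_invn_lt e0.
  exists N => k n kN nN.
  have -> : i (bs k - bs n) = (z - i (bs n)) - (z - i (bs k)) by rewrite rmorphB; ring.
  by apply: absD_lt; rewrite ?absN (lt_trans (zbs _)) ?hN.
apply: (zK l); apply/eqP; rewrite -subr_eq0; apply/eqP/abs_eq0/eqP.
rewrite eq_le abs_ge0 andbT; apply/ler_addgt0Pr => e e0; rewrite add0r.
have [N1 hN1] := bs_l e e0; have [N2 hN2] := exists_invn_lt e0.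
set n := maxn N1 N2.
have -> : z - i l = (z - i (bs n)) + i (bs n - l) by rewrite rmorphB; ring.
rewrite ltW // absD_lt //.
  by rewrite (lt_trans (zbs _)) // hN2 // leq_maxr.
by rewrite hN1 // leq_maxl.
Qed.

Lemma cball_image_nested (a : nat -> K) (r : nat -> R) : (forall n, 0 <= r n) ->
  (forall n, cball (fun b => v (i b)) (a n.+1) (r n.+1)
               `<=` cball (fun b => v (i b)) (a n) (r n))%classic ->
  forall n, (cball v (i (a n.+1)) (r n.+1) `<=` cball v (i (a n)) (r n))%classic.
Proof.
move=> r0 nestK n y; rewrite /cball /= => y_near.
(* A point of K at the same distance from a (n.+1) as y lies in the ball of K
   of index n.+1, hence in the one of index n. *)
have [c vc] : exists c, v (i c) = v (y - i (a n.+1)).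
  have [->|y0] := eqVneq (y - i (a n.+1)) 0; first by exists 0; rewrite rmorph0.
  exact: himm.1 _ (elimN eqP y0).
have step : v (i (a n.+1) - i (a n)) <= r n.
  by rewrite -rmorphB; apply: nestK; rewrite /cball /= subrr rmorph0 abs0.
have c_near : v (i (a n.+1 + c - a n)) <= r n.
  by apply: nestK; rewrite /cball /= addrC addKr vc.
have -> : y - i (a n) = (y - i (a n.+1)) + (i (a n.+1) - i (a n)) by ring.
apply: absD_le (step); rewrite -vc.
have -> : i c = i (a n.+1 + c - a n) - (i (a n.+1) - i (a n)).
  by rewrite rmorphB rmorphD; ring.
by apply: absD_le; rewrite ?absN.
Qed.

Hypothesis hLsph : sph_complete v.
Hypothesis hnotsph : ~ sph_complete (fun a : K => v (i a)).

Lemma exists_not_in_image : exists z, forall b, z <> i b.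
Proof.
apply: contrapT => allK; apply: hnotsph => a r r0 nestK.
have [y hy] := hLsph r0 (cball_image_nested r0 nestK).
have [b yb] : exists b, y = i b.
  by apply: contrapT => yK; apply: allK; exists y => b yb; apply: yK; exists b.
by exists b => n; have := hy n; rewrite /cball /= yb -rmorphB.
Qed.

End QuotientNorm.

Section PowerFamily.
Variables (K : closedFieldType) (i : {rmorphism K -> L}).
Hypothesis himm : immediate_ext i v.
Local Notation qn := (qnorm i v).

Lemma horner_map_sum_Xn n (lam : 'I_n -> K) (e : 'I_n -> nat) c y :
  (map_poly i (\sum_(k < n) lam k *: 'X^(e k) - c%:P)).[y]
  = \sum_(k < n) i (lam k) * y ^+ e k - i c.
Proof.
rewrite raddfB /= map_polyC hornerD hornerN hornerC raddf_sum /= horner_sum.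
by congr (_ - _); apply: eq_bigr => k _; rewrite map_polyZ map_polyXn hornerZ hornerXn.
Qed.

Lemma horner_near z (F : {poly K}) : (forall b, z <> i b) ->
  exists2 u, qn z < u & forall a, v (z - i a) < u ->
    v (map_poly i F).[z] = v (map_poly i F).[i a].
Proof.
move=> zK; have [rs ->] := closed_field_poly_normal F.
have [u ru near_roots] := @right_nbhs_seq _ _ (fun b t => t < v (z - i b)) (qn z) rs
  (fun b _ => ex_intro2 _ _ (v (z - i b)) (qnorm_lt_dist himm zK b) (fun t _ => id)).
exists u => // a za; have rt := qnorm_lt_dist himm zK a.
rewrite map_polyZ (map_prod_XsubC _ _ _ id) !hornerZ !absM !horner_prod !abs_prod.
congr (_ * _); apply: eq_big_seq => b bs; rewrite !hornerXsubC.
have -> : i a - i b = (z - i b) - (z - i a) by ring.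
by rewrite [RHS]absD_eql // absN near_roots.
Qed.

Variables (p m : nat) (z : L).
Hypotheses (p_pr : prime p) (zK : forall b, z <> i b) (vz1 : v z = 1).
Hypotheses (r_gt0 : 0 < qn z) (vp_le : v p%:R <= qn z ^+ (p ^ m)).
Local Notation r := (qn z).

Lemma absB_exprn a k : r < v (z - i a) -> v (z - i a) < 1 -> (k <= m)%N ->
  v (z ^+ (p ^ k) - i a ^+ (p ^ k)) = v (z - i a) ^+ (p ^ k).
Proof.
set t := v (z - i a) => rt t1 km.
have t0 : 0 < t by apply: lt_trans rt.
have va1 : v (i a) <= 1 by rewrite -[i a](subKr z) absD_le ?absN ?vz1 // ltW.
have := abs_exprD_sub_le k p_pr va1 (ltW t1); rewrite subrKC => frob.
have err_lt : v (z ^+ (p ^ k) - i a ^+ (p ^ k) - (z - i a) ^+ (p ^ k)) < t ^+ (p ^ k).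
  apply: le_lt_trans frob _; apply: le_lt_trans (ler_piMr (abs_ge0 _) (ltW t1)) _.
  apply: le_lt_trans vp_le _; apply: lt_le_trans (_ : t ^+ (p ^ m) <= _).
    by rewrite ltrXn2r ?expn_eq0 ?(gtn_eqF (prime_gt0 p_pr)) ?ltW.
  by rewrite ler_wiXn2l ?ltW // leq_exp2l // prime_gt1.
have -> : z ^+ (p ^ k) - i a ^+ (p ^ k) =
    (z - i a) ^+ (p ^ k) + (z ^+ (p ^ k) - i a ^+ (p ^ k) - (z - i a) ^+ (p ^ k)).
  by ring.
by rewrite absD_eql absX.
Qed.

Lemma powers_dist_ge (lam : 'I_m -> K) (c : K) : exists a,
  [/\ r < v (z - i a), v (z - i a) < 1 &
    forall j, v (i (lam j)) * v (z - i a) ^+ (p ^ j)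
      <= v (\sum_(k < m) i (lam k) * z ^+ (p ^ k) - i c)].
Proof.
have r_lt1 : r < 1 by have := qnorm_lt_dist himm zK 0; rewrite rmorph0 subr0 vz1.
have [u2 ru2 F_near] := horner_near (\sum_(k < m) lam k *: 'X^(p ^ k) - c%:P) zK.
have [[j0 lam_j0] | lam0] := pselect (exists j0, lam j0 != 0); last first.
  have [a [ra a1]] := exists_dist_near himm zK r_lt1.
  exists a; split => // j; suff -> : lam j = 0 by rewrite rmorph0 abs0 mul0r abs_ge0.
  by apply/eqP/contraT => lam_j; exfalso; apply: lam0; exists j.
have lam_j0_gt0 : 0 < v (i (lam j0)) by rewrite abs_gt0 // fmorph_eq0.
have p_mono (j k : 'I_m) : (j < k)%N -> (p ^ j < p ^ k)%N.
  by rewrite ltn_exp2l // prime_gt1.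
have [J [u1 ru1 dominant]] :=
  exists_strict_dominant r_gt0 (fun j => abs_ge0 (i (lam j))) lam_j0_gt0 p_mono.
have [|a [ra]] := exists_dist_near himm zK (_ : r < Num.min u1 (Num.min u2 1)).
  by rewrite !lt_min ru1 ru2 r_lt1.
rewrite !lt_min => /andP [a_u1 /andP [a_u2 a1]]; exists a; split => //.
set t := v (z - i a).
pose X := \sum_(k < m) i (lam k) * z ^+ (p ^ k) - i c.
pose Y := \sum_(k < m) i (lam k) * i a ^+ (p ^ k) - i c.
have XY : v X = v Y.
  by have := F_near a a_u2; rewrite !horner_map_sum_Xn.
have term_abs (k : 'I_m) :
    v (i (lam k) * (z ^+ (p ^ k) - i a ^+ (p ^ k))) = v (i (lam k)) * t ^+ (p ^ k).
  by rewrite absM absB_exprn // ltnW.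
have XsubY : v (X - Y) = v (i (lam J)) * t ^+ (p ^ J).
  have -> : X - Y = \sum_(k < m) i (lam k) * (z ^+ (p ^ k) - i a ^+ (p ^ k)).
    by rewrite /X /Y opprB subrKA -sumrB; apply: eq_bigr => k _; rewrite mulrBr.
  rewrite (abs_sum_dominant (J := J)) ?term_abs // => k kJ.
  by rewrite !term_abs dominant.
move=> j; apply: le_trans (_ : v (i (lam J)) * t ^+ (p ^ J) <= _).
  by have [-> // | jJ] := eqVneq j J; rewrite ltW // dominant.
by rewrite -XsubY absB_le_of_eq.
Qed.

Lemma quot_orthogonal_powers : quot_orthogonal i v (fun j : 'I_m => z ^+ (p ^ j)).
Proof.
split=> [j b zb | lam].
  have [a [ra _ bound]] := powers_dist_ge (fun k => (k == j)%:R) b.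
  have sum_delta : \sum_(k < m) i (k == j)%:R * z ^+ (p ^ k) = z ^+ (p ^ j).
    rewrite (bigD1 j) //= eqxx rmorph1 mul1r big1 ?addr0 // => k /negPf ->.
    by rewrite rmorph0 mul0r.
  have := bound j; rewrite sum_delta zb subrr abs0 eqxx rmorph1 abs1 mul1r.
  by rewrite leNgt exprn_gt0 // (lt_trans r_gt0).
apply/eqP; rewrite eq_le qnorm_sum_le /=.
apply: bigmax_le => [|j _]; first exact: qnorm_ge0.
apply: qnorm_ge => c; have [a [ra a1 bound]] := powers_dist_ge lam c.
apply: le_trans _ (bound j); apply: le_trans (qnorm_le i _ (lam j * a ^+ (p ^ j))) _.
by rewrite rmorphM rmorphXn -mulrBr absM absB_exprn // ltnW.
Qed.

End PowerFamily.
End NonArchimedean.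

Unset Implicit Arguments.

Theorem mainTheorem4 (R : realType) (K : closedFieldType) (L : fieldType)
  (i : {rmorphism K -> L}) (v : L -> R) (p : nat)
  (hv : nonarch_abs v)
  (hnontriv : nontrivial_abs (fun a : K => v (i a)))
  (hcomplete : complete_abs (fun a : K => v (i a)))
  (hnotsph : ~ sph_complete (fun a : K => v (i a)))
  (hLsph : sph_complete v)
  (himm : immediate_ext i v)
  (hchar0 : [pchar K] =i pred0)
  (hp : prime p) (hres : v (i p%:R) < 1) :
  forall m : nat, exists x : 'I_m -> L, quot_orthogonal i v x.
Proof.
move=> m.
have [z0 z0K] := exists_not_in_image hv himm hLsph hnotsph.
have vp_lt1 : v p%:R < 1 by rewrite -(rmorph_nat i).
have [z [zK vz1 r_gt0 vp_le]] := exists_unit_dist_ge hv himm (p ^ m) z0K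
  (qnorm_gt0 hv hcomplete z0K) (abs_ge0 hv _) vp_lt1.
by exists (fun j => z ^+ (p ^ j)); apply: quot_orthogonal_powers.
Qed.
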